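(* Let $f:\{0,1\}^n\to\{0,1\}$ be $\epsilon$-far from being $t$-symmetric. Then every $J\subseteq[n]$ with $|J|\ge t$ satisfies $\mathrm{SymInf}_f(J)\ge\epsilon$.
   Context: $\mathcal{S}_J$ is the set of permutations of $[n]$ fixing every element outside $J$; $\pi x$ is the vector whose $\pi(i)$-th coordinate is $x_i$. $f$ is $J$-symmetric if $f(\pi x)=f(x)$ for all $x$, $\pi\in\mathcal{S}_J$; $t$-symmetric if $J$-symmetric for some $|J|\ge t$. $f$ is $\epsilon$-far from being $t$-symmetric if $\Pr_x[f(x)\ne g(x)]\ge\epsilon$ for all $t$-symmetric $g$. $\mathrm{SymInf}_f(J)=\Pr_{x,\pi}[f(x)\ne f(\pi x)]$, $x$ uniform in $\{0,1\}^n$, $\pi$ uniform in $\mathcal{S}_J$. *)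

From mathcomp Require Import all_boot all_order all_fingroup all_algebra.
Set Implicit Arguments. Unset Strict Implicit. Unset Printing Implicit Defensive.
Import GRing.Theory Num.Theory.
Local Open Scope ring_scope.

Definition cube (n : nat) := {ffun 'I_n -> bool}.

Definition SJ (n : nat) (J : {set 'I_n}) : {set {perm 'I_n}} :=
  [set s : {perm 'I_n} | [forall i, (i \notin J) ==> (s i == i)]].

(* pi x : the vector whose pi(i)-th coordinate is x_i, i.e. (pi x)_j = x_{pi^-1 j}. *)
Definition permvec (n : nat) (s : {perm 'I_n}) (x : cube n) : cube n :=
  [ffun j => x ((s^-1)%g j)].

Definition Jsym (n : nat) (J : {set 'I_n}) (f : cube n -> bool) : Prop :=
  forall (x : cube n) (s : {perm 'I_n}), s \in SJ J -> f (permvec s x) = f x.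

Definition tsym (n t : nat) (f : cube n -> bool) : Prop :=
  exists J : {set 'I_n}, (t <= #|J|)%N /\ Jsym J f.

Definition dist (R : numFieldType) (n : nat) (f g : cube n -> bool) : R :=
  #|[set x : cube n | f x != g x]|%:R / #|{: cube n}|%:R.

Definition far_tsym (R : numFieldType) (n t : nat) (f : cube n -> bool) (eps : R) : Prop :=
  forall g : cube n -> bool, tsym t g -> eps <= dist R f g.

Definition SymInf (R : numFieldType) (n : nat) (f : cube n -> bool) (J : {set 'I_n}) : R :=
  #|[set p : cube n * {perm 'I_n} | (p.2 \in SJ J) && (f p.1 != f (permvec p.2 p.1))]|%:R
  / (#|{: cube n}| * #|SJ J|)%:R.

(* Let G be the group of permutations fixing every coordinate outside J and
   let g be the majority vote of f along G: g x holds iff f (pi x) holds for at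
   least half of the pi in G.  Then g is J-symmetric.  Averaging over pi in G,
   a point x at which f (pi x) holds for k of the |G| permutations contributes
   min(k, |G| - k) / |G| to Pr[f <> g] and 2 k (|G| - k) / |G|^2 to SymInf_f(J),
   and the first is at most the second because max(k, |G| - k) >= |G| / 2.
   Hence SymInf_f(J) >= Pr[f <> g] >= eps. *)

From mathcomp Require Import all_boot all_order all_fingroup all_algebra zify.
Import Order.TTheory GRing.Theory Num.Theory.

Set Implicit Arguments.
Unset Strict Implicit.
Unset Printing Implicit Defensive.

Lemma card_set_sum (T : finType) (P : pred T) : #|[set x | P x]| = \sum_x P x.
Proof. by rewrite -sum1dep_card big_mkcond; apply: eq_bigr => x _; case: (P x). Qed.

Lemma sum_if_nat (I : finType) (A : pred I) (P : pred I) (u v : nat) :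
  \sum_(i in A) (if P i then u else v) =
  (\sum_(i in A) P i) * u + (\sum_(i in A) ~~ P i) * v.
Proof.
rewrite !big_distrl -big_split; apply: eq_bigr => i _.
by case: (P i); rewrite /= ?mul0n ?mul1n ?addn0.
Qed.

Lemma sum_negb_nat (I : finType) (A : pred I) (P : pred I) :
  \sum_(i in A) ~~ P i = #|A| - \sum_(i in A) P i.
Proof.
have <- : \sum_(i in A) ~~ P i + \sum_(i in A) P i = #|A|.
  by rewrite -big_split -sum1_card; apply: eq_bigr => i _; exact: addn_negb.
by rewrite addnK.
Qed.

Lemma majority_mul_le (m k : nat) : k <= m ->
  m * (if m <= k.*2 then m - k else k) <= (k * (m - k)).*2.
Proof.
move=> le_km; case: ifP => [le_m_2k | /negbT lt_2k_m].
  by rewrite -mul2n mulnA mul2n leq_mul.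
rewrite -muln2 -mulnA mulnC leq_mul // muln2; lia.
Qed.

Section MajorityVote.

Variables (aT : finGroupType) (D : {set aT}) (T : finType) (to : action D T).
Variables (G : {group aT}) (f : T -> bool).
Hypothesis sGD : G \subset D.

Definition act_hits x := \sum_(a in G) f (to x a).

Definition majority x := #|G| <= (act_hits x).*2.

Lemma sum_act_translate (F : T -> nat) b x : b \in G ->
  \sum_(a in G) F (to (to x b) a) = \sum_(a in G) F (to x a).
Proof.
move=> Gb; rewrite [RHS](reindex_inj (mulgI b)) /=.
under [RHS]eq_bigl => a do rewrite groupMl //.
by apply: eq_bigr => a Ga; rewrite actMin ?(subsetP sGD).
Qed.

Lemma act_hits_act b x : b \in G -> act_hits (to x b) = act_hits x.
Proof. exact: (sum_act_translate f). Qed.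

Lemma majority_act b x : b \in G -> majority (to x b) = majority x.
Proof. by move=> Gb; rewrite /majority act_hits_act. Qed.

Lemma act_hits_le x : act_hits x <= #|G|.
Proof. by rewrite -sum1_card; apply: leq_sum => a _; exact: leq_b1. Qed.

Lemma sum_neq_act y x : \sum_(a in G) (y != f (to x a)) =
  if y then #|G| - act_hits x else act_hits x.
Proof.
case: y; last by apply: eq_bigr => a _; case: (f _).
by rewrite /act_hits -sum_negb_nat.
Qed.

Lemma sum_mul_card_group (F : T -> nat) :
  (\sum_x F x) * #|G| = \sum_x \sum_(a in G) F (to x a).
Proof.
rewrite exchange_big -sum1_card big_distrr /=; apply: eq_bigr => a _.
by rewrite muln1 (reindex_inj (act_inj to a)).
Qed.

Lemma card_majority_neq :
  #|[set x | f x != majority x]| * #|G| =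
  \sum_x (if majority x then #|G| - act_hits x else act_hits x).
Proof.
rewrite card_set_sum sum_mul_card_group; apply: eq_bigr => x _.
by rewrite -sum_neq_act; apply: eq_bigr => a Ga; rewrite majority_act // eq_sym.
Qed.

Lemma card_act_neq :
  #|[set p : T * aT | (p.2 \in G) && (f p.1 != f (to p.1 p.2))]| * #|G| =
  \sum_x (act_hits x * (#|G| - act_hits x)).*2.
Proof.
have -> : #|[set p : T * aT | (p.2 \in G) && (f p.1 != f (to p.1 p.2))]| =
          \sum_x \sum_(a in G) (f x != f (to x a)).
  rewrite card_set_sum pair_big [RHS]big_mkcond /=.
  by apply: eq_bigr => -[x a] _; case: (a \in G).
rewrite sum_mul_card_group; apply: eq_bigr => x _.
(* After translating by b, the inner sum compares f (to x b) with every f (to x a). *)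
under eq_bigr => b Gb do rewrite (sum_act_translate (fun y => f (to x b) != f y)) //.
rewrite (eq_bigr _ (fun b _ => sum_neq_act _ _)) sum_if_nat sum_negb_nat.
by rewrite -/(act_hits x) mulnC addnn.
Qed.

Theorem card_majority_neq_le :
  #|[set x | f x != majority x]| * #|G| <=
  #|[set p : T * aT | (p.2 \in G) && (f p.1 != f (to p.1 p.2))]|.
Proof.
rewrite -(leq_pmul2r (cardG_gt0 G)) card_act_neq card_majority_neq big_distrl /=.
by apply: leq_sum => x _; rewrite mulnC majority_mul_le ?act_hits_le.
Qed.

End MajorityVote.

Section PermutedCube.

Variable n : nat.

Local Open Scope group_scope.

Lemma permvec1 (x : cube n) : permvec 1 x = x.
Proof. by apply/ffunP => j; rewrite ffunE invg1 perm1. Qed.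

Lemma permvecM (x : cube n) (s t : {perm 'I_n}) :
  permvec (s * t) x = permvec t (permvec s x).
Proof. by apply/ffunP => j; rewrite !ffunE invMg permM. Qed.

Definition permvec_action := TotalAction (to := fun x s => permvec s x) permvec1 permvecM.

Lemma SJ_astab (J : {set 'I_n}) : SJ J = 'C(~: J | 'P).
Proof.
apply/setP => s; rewrite inE; apply/forallP/astabP => [fixJ i | fixJ i].
  by rewrite inE => notJi; apply/eqP; exact: implyP (fixJ i) notJi.
by apply/implyP => notJi; rewrite -{2}(fixJ i) ?inE.
Qed.

End PermutedCube.

Local Open Scope ring_scope.

Theorem corollary1 (R : realFieldType) (n t : nat) (f : cube n -> bool) (eps : R) :
  far_tsym t f eps ->
  forall J : {set 'I_n}, (t <= #|J|)%N -> eps <= SymInf R f J.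
Proof.
move=> far_f J le_tJ.
pose G := ('C(~: J | 'P))%G.
pose g := majority (permvec_action n) G f.
have sym_g : Jsym J g.
  by move=> x s; rewrite SJ_astab; exact: (majority_act _ f (subsetT G)).
apply: le_trans (far_f g (ex_intro _ J (conj le_tJ sym_g))) _.
have cube_gt0 : (0 < #|{: cube n}|)%N by apply/card_gt0P; exists [ffun=> false].
rewrite /dist /SymInf SJ_astab natrM invfM mulrA ler_pdivlMr ?ltr0n ?(cardG_gt0 G) //.
rewrite mulrAC ler_pM2r ?invr_gt0 ?ltr0n // -natrM ler_nat.
exact: (card_majority_neq_le _ f (subsetT G)).
Qed.
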